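(* Let $\mathcal{A}$ be a Desargues affine plane, let $O\neq I$ be points, and let $\delta$ be a dilatation of $\mathcal{A}$. Equip $\ell^{OI}$ with the skew field structure with zero $O$ and unit $I$, and the line $\delta(\ell^{OI})$ with the skew field structure with zero $\delta(O)$ and unit $\delta(I)$. Then for all $A,B,C\in\ell^{OI}$ with $B\neq C$, \[ \delta(r(A,B;C))=r(\delta(A),\delta(B);\delta(C)), \] where the ratio on the left is computed in $\ell^{OI}$ and the ratio on the right in $\delta(\ell^{OI})$.
   Context: A Desargues affine plane is an incidence structure of points and lines in which any two distinct points lie on exactly one line, through a point not on a line $\ell$ there is exactly one line disjoint from $\ell$ (Playfair), there exist three non-collinear points, and Desargues' axiom holds: if $A,B,C,A',B',C'$ are points such that the pairwise distinct lines $AA',BB',CC'$ are either all parallel or all pass through one point, and $AB\parallel A'B'$, $BC\parallel B'C'$ (with $AB\neq A'B'$, $BC\neq B'C'$, $A\ne C$, $A'\ne C'$), then $AC\parallel A'C'$. Skew field on a line: for distinct points $O,I$ and points $A,B$ on the line $\ell^{OI}$, addition is defined by: choose a point $B_1\notin\ell^{OI}$; let $P_1$ be the intersection of the line through $B_1$ parallel to $\ell^{OI}$ with the line through $A$ parallel to $OB_1$; then $A+B$ is the intersection of $\ell^{OI}$ with the line through $P_1$ parallel to $BB_1$. Multiplication is defined by: choose $B_1\notin\ell^{OI}$; let $P_1$ be the intersection of the line through $A$ parallel to $IB_1$ with the line $OB_1$; then $A\cdot B$ is the intersection of $\ell^{OI}$ with the line through $P_1$ parallel to $BB_1$. These operations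 do not depend on the choice of $B_1$ and make $(\ell^{OI},+,\cdot)$ a skew field with zero $O$ and unit $I$; the same construction applies to any line with any chosen pair of distinct points as zero and unit. $-X$ and $X^{-1}$ denote additive and multiplicative inverses, $X-Y=X+(-Y)$. Ratio of three points on such a line: $r(A,B;C)=(B-C)^{-1}(A-C)$ for $B\neq C$. A dilatation of $\mathcal{A}$ is a collineation $\delta$ such that $\delta(P)\delta(Q)\parallel PQ$ for all points $P\neq Q$. *)

From Stdlib Require Import ClassicalEpsilon.

Record AffinePlane := {
  Point : Type;
  Line : Type;
  incid : Point -> Line -> Prop;
  ap_line_exists : forall P Q : Point, P <> Q ->
      exists l : Line, incid P l /\ incid Q l;
  ap_line_unique : forall (P Q : Point) (l m : Line), P <> Q ->
      incid P l -> incid Q l -> incid P m -> incid Q m -> l = m;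
  ap_playfair_exists : forall (P : Point) (l : Line), ~ incid P l ->
      exists m : Line, incid P m /\ (forall X, ~ (incid X m /\ incid X l));
  ap_playfair_unique : forall (P : Point) (l m1 m2 : Line), ~ incid P l ->
      incid P m1 -> (forall X, ~ (incid X m1 /\ incid X l)) ->
      incid P m2 -> (forall X, ~ (incid X m2 /\ incid X l)) -> m1 = m2;
  ap_noncollinear : exists A B C : Point,
      ~ (exists l : Line, incid A l /\ incid B l /\ incid C l)
}.

Arguments incid {_} _ _.

Section Plane.
Variable AP : AffinePlane.
Local Notation Pt := (Point AP).
Local Notation Ln := (Line AP).

Definition parallel (l m : Ln) : Prop :=
  l = m \/ (forall X : Pt, ~ (incid X l /\ incid X m)).

Definition desargues : Prop :=
  forall (A B C A' B' C' : Pt)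
         (lAA lBB lCC lAB lAB' lBC lBC' lAC lAC' : Ln),
    A <> A' -> B <> B' -> C <> C' ->
    A <> B -> A' <> B' -> B <> C -> B' <> C' -> A <> C -> A' <> C' ->
    incid A lAA -> incid A' lAA ->
    incid B lBB -> incid B' lBB ->
    incid C lCC -> incid C' lCC ->
    incid A lAB -> incid B lAB -> incid A' lAB' -> incid B' lAB' ->
    incid B lBC -> incid C lBC -> incid B' lBC' -> incid C' lBC' ->
    incid A lAC -> incid C lAC -> incid A' lAC' -> incid C' lAC' ->
    lAA <> lBB -> lBB <> lCC -> lAA <> lCC ->
    ((parallel lAA lBB /\ parallel lBB lCC /\ parallel lAA lCC) \/
     (exists P : Pt, incid P lAA /\ incid P lBB /\ incid P lCC)) ->
    parallel lAB lAB' -> lAB <> lAB' ->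
    parallel lBC lBC' -> lBC <> lBC' ->
    parallel lAC lAC'.

Definition collineation (d : Pt -> Pt) : Prop :=
  (forall P Q, d P = d Q -> P = Q) /\
  (forall Q, exists P, d P = Q) /\
  (forall l : Ln, exists m : Ln, forall P, incid P l <-> incid (d P) m) /\
  (forall m : Ln, exists l : Ln, forall P, incid P l <-> incid (d P) m).

Definition dilatation (d : Pt -> Pt) : Prop :=
  collineation d /\
  forall (P Q : Pt) (l m : Ln), P <> Q ->
    incid P l -> incid Q l -> incid (d P) m -> incid (d Q) m ->
    parallel l m.

Definition on_line (O I Z : Pt) : Prop :=
  exists l : Ln, incid O l /\ incid I l /\ incid Z l.

(** Geometric addition on l^{OI}: S = A + B, constructed with some auxiliary
    point B1 not on l^{OI} (the result does not depend on B1). *)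
Definition is_add (O I A B S : Pt) : Prop :=
  exists (l lOB1 lBB1 m1 m2 m3 : Ln) (B1 P1 : Pt),
    incid O l /\ incid I l /\ ~ incid B1 l /\
    incid O lOB1 /\ incid B1 lOB1 /\
    incid B lBB1 /\ incid B1 lBB1 /\
    incid B1 m1 /\ parallel m1 l /\
    incid A m2 /\ parallel m2 lOB1 /\
    incid P1 m1 /\ incid P1 m2 /\
    incid P1 m3 /\ parallel m3 lBB1 /\
    incid S m3 /\ incid S l.

Definition is_mul (O I A B S : Pt) : Prop :=
  exists (l lOB1 lIB1 lBB1 m2 m3 : Ln) (B1 P1 : Pt),
    incid O l /\ incid I l /\ ~ incid B1 l /\
    incid O lOB1 /\ incid B1 lOB1 /\
    incid I lIB1 /\ incid B1 lIB1 /\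
    incid B lBB1 /\ incid B1 lBB1 /\
    incid A m2 /\ parallel m2 lIB1 /\
    incid P1 m2 /\ incid P1 lOB1 /\
    incid P1 m3 /\ parallel m3 lBB1 /\
    incid S m3 /\ incid S l.

Definition sadd (O I A B : Pt) : Pt :=
  epsilon (inhabits O) (fun S => is_add O I A B S).
Definition smul (O I A B : Pt) : Pt :=
  epsilon (inhabits O) (fun S => is_mul O I A B S).
Definition sopp (O I Y : Pt) : Pt :=
  epsilon (inhabits O) (fun Z => on_line O I Z /\ sadd O I Y Z = O).
Definition sinv (O I Y : Pt) : Pt :=
  epsilon (inhabits O) (fun Z => on_line O I Z /\ smul O I Y Z = I).
Definition ssub (O I X Y : Pt) : Pt := sadd O I X (sopp O I Y).

Definition ratio (O I A B C : Pt) : Pt :=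
  smul O I (sinv O I (ssub O I B C)) (ssub O I A C).

End Plane.

Arguments parallel {_} _ _.
Arguments desargues _ : clear implicits.
Arguments collineation {_} _.
Arguments dilatation {_} _.
Arguments on_line {_} _ _ _.
Arguments is_add {_} _ _ _ _ _.
Arguments is_mul {_} _ _ _ _ _.
Arguments sadd {_} _ _ _ _.
Arguments smul {_} _ _ _ _.
Arguments sopp {_} _ _ _.
Arguments sinv {_} _ _ _.
Arguments ssub {_} _ _ _ _.
Arguments ratio {_} _ _ _ _ _.

(* A collineation carries the configuration defining [is_add] (resp. [is_mul]) on
   the line OI to the same configuration on the image line, so it commutes with the operations
   once these are known not to depend on the auxiliary point B1; it then commutes with opposites
   and inverses, which are unique, and hence with the ratio.
   Both constructions first move B1 to P1, by the translation O -> A (resp. the homothety with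
   centre O and I -> A), and then project P1 back onto OI parallel to B B1. For a second auxiliary
   point B1', Desargues' axiom (parallel resp. central case) gives B1 B1' // P1 P1', and then,
   applied again, B B1' // S P1', so both choices give the same S. Auxiliary points in special
   position are compared through a third one; this is impossible only in the four-point plane,
   where OI has just two points. *)

From Stdlib Require Import Classical ClassicalEpsilon.

Section AffineGeometry.

Context {AP : AffinePlane}.
Local Notation Pt := (Point AP).
Local Notation Ln := (Line AP).

Lemma meet_unique (l m : Ln) (X Y : Pt) :
  l <> m -> incid X l -> incid X m -> incid Y l -> incid Y m -> X = Y.
Proof.
  intros lm Xl Xm Yl Ym. apply NNPP; intro XY.
  exact (lm (ap_line_unique AP X Y l m XY Xl Yl Xm Ym)).
Qed.

Lemma parallel_refl (l : Ln) : parallel l l.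
Proof. now left. Qed.

Lemma parallel_sym (l m : Ln) : parallel l m -> parallel m l.
Proof. intros [E | D]; [now left | right; intros X [Xm Xl]; exact (D X (conj Xl Xm))]. Qed.

Lemma parallel_eq (l m : Ln) (X : Pt) : parallel l m -> incid X l -> incid X m -> l = m.
Proof. intros [E | D] Xl Xm; [exact E | destruct (D X (conj Xl Xm))]. Qed.

Lemma parallel_disjoint (l m : Ln) (X : Pt) :
  parallel l m -> l <> m -> incid X l -> ~ incid X m.
Proof. intros lm ne Xl Xm. exact (ne (parallel_eq l m X lm Xl Xm)). Qed.

Lemma parallel_trans (l m n : Ln) : parallel l m -> parallel m n -> parallel l n.
Proof.
  intros lm mn. destruct (classic (l = n)) as [E | ln]; [now left |].
  right. intros X [Xl Xn]. apply ln.
  destruct (classic (incid X m)) as [Xm | Xm].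
  - rewrite (parallel_eq l m X lm Xl Xm). exact (parallel_eq m n X mn Xm Xn).
  - destruct lm as [<- | Dlm]; [contradiction |].
    destruct mn as [<- | Dmn]; [contradiction |].
    apply (ap_playfair_unique AP X m l n Xm Xl); [| exact Xn |];
      intros Y [Y1 Y2]; [exact (Dlm Y (conj Y1 Y2)) | exact (Dmn Y (conj Y2 Y1))].
Qed.

Lemma parallel_through (P : Pt) (l : Ln) : exists m, incid P m /\ parallel m l.
Proof.
  destruct (classic (incid P l)) as [Pl | Pl]; [exists l; split; [exact Pl | now left] |].
  destruct (ap_playfair_exists AP P l Pl) as [m [Pm D]].
  exists m. split; [exact Pm | now right].
Qed.

Lemma parallel_through_unique (l m m' : Ln) (P : Pt) :
  incid P m -> parallel m l -> incid P m' -> parallel m' l -> m = m'.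
Proof.
  intros Pm ml Pm' m'l.
  exact (parallel_eq m m' P (parallel_trans _ _ _ ml (parallel_sym _ _ m'l)) Pm Pm').
Qed.

Lemma parallels_meet (a b m n : Ln) (X : Pt) :
  a <> b -> incid X a -> incid X b -> parallel m a -> parallel n b ->
  exists Y, incid Y m /\ incid Y n.
Proof.
  intros ab Xa Xb ma nb. apply NNPP; intro nomeet. apply ab.
  apply (parallel_eq a b X); [| exact Xa | exact Xb].
  apply (parallel_trans _ m); [exact (parallel_sym _ _ ma) |].
  apply (parallel_trans _ n); [| exact nb].
  right. intros Y [Ym Yn]. exact (nomeet (ex_intro _ Y (conj Ym Yn))).
Qed.

Lemma exists_point_off (l : Ln) : exists P, ~ incid P l.
Proof.
  destruct (ap_noncollinear AP) as (A & B & C & H).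
  apply NNPP; intro all_on. apply H. exists l.
  repeat split; apply NNPP; intro off; apply all_on; eexists; exact off.
Qed.

Lemma exists_point_off_two_lines (l n : Ln) (O I B1 : Pt) :
  incid O l -> incid O n -> incid I l -> ~ incid I n -> incid B1 n -> ~ incid B1 l ->
  exists X, ~ incid X l /\ ~ incid X n.
Proof.
  intros Ol On Il In B1n B1l.
  destruct (parallel_through I n) as [k [Ik kn]].
  destruct (parallel_through B1 l) as [m [B1m ml]].
  destruct (parallels_meet n l k m O) as [X [Xk Xm]]; auto.
  { intros <-. auto. }
  exists X. split.
  - apply (parallel_disjoint m l X ml); [intros ->; auto | exact Xm].
  - apply (parallel_disjoint k n X kn); [intros ->; auto | exact Xk].
Qed.

Lemma not_parallel_through_off (l n : Ln) (O X : Pt) :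
  incid O l -> incid O n -> incid X n -> ~ incid X l -> ~ parallel n l.
Proof. intros Ol On Xn Xl nl. apply Xl. rewrite <- (parallel_eq n l O nl On Ol). exact Xn. Qed.

Lemma joins_not_parallel (l lOB1 lIB1 : Ln) (O I B1 : Pt) :
  O <> I -> incid O l -> incid I l -> ~ incid B1 l ->
  incid O lOB1 -> incid B1 lOB1 -> incid I lIB1 -> incid B1 lIB1 -> ~ parallel lOB1 lIB1.
Proof.
  intros OI Ol Il B1l OlOB1 B1lOB1 IlIB1 B1lIB1 par.
  rewrite <- (parallel_eq lOB1 lIB1 B1 par B1lOB1 B1lIB1) in IlIB1.
  apply B1l. rewrite (ap_line_unique AP O I l lOB1 OI Ol Il OlOB1 IlIB1). exact B1lOB1.
Qed.

(** * Translations, homotheties and parallel projections *)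

Inductive translation_image (l : Ln) (O A B1 P1 : Pt) : Prop :=
  TranslationImage (lOB1 m1 m2 : Ln) :
    incid O lOB1 -> incid B1 lOB1 -> incid B1 m1 -> parallel m1 l -> incid P1 m1 ->
    incid A m2 -> parallel m2 lOB1 -> incid P1 m2 -> translation_image l O A B1 P1.

Inductive homothety_image (O I A B1 P1 : Pt) : Prop :=
  HomothetyImage (lOB1 lIB1 m2 : Ln) :
    incid O lOB1 -> incid B1 lOB1 -> incid I lIB1 -> incid B1 lIB1 ->
    incid A m2 -> parallel m2 lIB1 -> incid P1 m2 -> incid P1 lOB1 ->
    homothety_image O I A B1 P1.

Inductive parallel_projection (l : Ln) (B B1 P1 S : Pt) : Prop :=
  ParallelProjection (lBB1 m3 : Ln) :
    incid B lBB1 -> incid B1 lBB1 -> incid P1 m3 -> parallel m3 lBB1 ->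
    incid S m3 -> incid S l -> parallel_projection l B B1 P1 S.

Lemma translation_image_exists (l : Ln) (O A B1 : Pt) :
  incid O l -> ~ incid B1 l -> exists P1, translation_image l O A B1 P1.
Proof.
  intros Ol B1l. assert (OB1 : O <> B1) by (intro; subst; auto).
  destruct (ap_line_exists AP O B1 OB1) as [lOB1 [OlOB1 B1lOB1]].
  destruct (parallel_through B1 l) as [m1 [B1m1 m1l]].
  destruct (parallel_through A lOB1) as [m2 [Am2 m2lOB1]].
  destruct (parallels_meet l lOB1 m1 m2 O) as [P1 [P1m1 P1m2]]; auto.
  { intros <-. auto. }
  exists P1. econstructor; eauto.
Qed.

Lemma translation_image_off (l : Ln) (O A B1 P1 : Pt) :
  ~ incid B1 l -> translation_image l O A B1 P1 -> ~ incid P1 l.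
Proof.
  intros B1l [lOB1 m1 m2 _ _ B1m1 m1l P1m1 _ _ _].
  apply (parallel_disjoint m1 l P1 m1l); [intros ->; auto | exact P1m1].
Qed.

Lemma translation_image_on_parallel (l m : Ln) (O A B1 P1 : Pt) :
  incid B1 m -> parallel m l -> translation_image l O A B1 P1 -> incid P1 m.
Proof.
  intros B1m ml [lOB1 m1 m2 _ _ B1m1 m1l P1m1 _ _ _].
  rewrite (parallel_through_unique l m m1 B1 B1m ml B1m1 m1l). exact P1m1.
Qed.

Lemma translation_image_unique (l : Ln) (O A B1 P1 P1' : Pt) :
  incid O l -> ~ incid B1 l ->
  translation_image l O A B1 P1 -> translation_image l O A B1 P1' -> P1 = P1'.
Proof.
  intros Ol B1l [lOB1 m1 m2 OlOB1 B1lOB1 B1m1 m1l P1m1 Am2 m2lOB1 P1m2]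
                [lOB1' m1' m2' OlOB1' B1lOB1' B1m1' m1'l P1'm1' Am2' m2'lOB1' P1'm2'].
  assert (OB1 : O <> B1) by (intro; subst; auto).
  pose proof (ap_line_unique AP O B1 lOB1 lOB1' OB1 OlOB1 B1lOB1 OlOB1' B1lOB1'); subst lOB1'.
  pose proof (parallel_through_unique l m1 m1' B1 B1m1 m1l B1m1' m1'l); subst m1'.
  pose proof (parallel_through_unique lOB1 m2 m2' A Am2 m2lOB1 Am2' m2'lOB1'); subst m2'.
  apply (meet_unique m1 m2); auto.
  intros <-. apply (not_parallel_through_off l lOB1 O B1); auto.
  exact (parallel_trans _ _ _ (parallel_sym _ _ m2lOB1) m1l).
Qed.

Lemma translation_image_zero (l : Ln) (O B1 P1 : Pt) :
  incid O l -> ~ incid B1 l -> translation_image l O O B1 P1 -> P1 = B1.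
Proof.
  intros Ol B1l [lOB1 m1 m2 OlOB1 B1lOB1 B1m1 m1l P1m1 Om2 m2lOB1 P1m2].
  rewrite (parallel_eq m2 lOB1 O m2lOB1 Om2 OlOB1) in P1m2.
  apply (meet_unique m1 lOB1); auto.
  intros <-. exact (not_parallel_through_off l m1 O B1 Ol OlOB1 B1lOB1 B1l m1l).
Qed.

Lemma translation_image_moves (l : Ln) (O A B1 P1 : Pt) :
  incid O l -> incid A l -> A <> O -> ~ incid B1 l -> translation_image l O A B1 P1 -> P1 <> B1.
Proof.
  intros Ol Al AO B1l [lOB1 m1 m2 OlOB1 B1lOB1 _ _ _ Am2 m2lOB1 P1m2] ->.
  rewrite (parallel_eq m2 lOB1 B1 m2lOB1 P1m2 B1lOB1) in Am2.
  apply AO. apply (meet_unique lOB1 l); auto. intros ->; auto.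
Qed.

Lemma translation_image_inj (l : Ln) (O A A' B1 P1 : Pt) :
  incid O l -> incid A l -> incid A' l -> ~ incid B1 l ->
  translation_image l O A B1 P1 -> translation_image l O A' B1 P1 -> A = A'.
Proof.
  intros Ol Al A'l B1l HP HP'. pose proof (translation_image_off l O A B1 P1 B1l HP) as P1l.
  destruct HP as [lOB1 m1 m2 OlOB1 B1lOB1 _ _ _ Am2 m2lOB1 P1m2].
  destruct HP' as [lOB1' m1' m2' OlOB1' B1lOB1' _ _ _ A'm2' m2'lOB1' P1m2'].
  assert (OB1 : O <> B1) by (intro; subst; auto).
  pose proof (ap_line_unique AP O B1 lOB1 lOB1' OB1 OlOB1 B1lOB1 OlOB1' B1lOB1'); subst lOB1'.
  pose proof (parallel_through_unique lOB1 m2 m2' P1 P1m2 m2lOB1 P1m2' m2'lOB1'); subst m2'.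
  apply (meet_unique m2 l); auto. intros ->; auto.
Qed.

Lemma homothety_image_exists (l : Ln) (O I A B1 : Pt) :
  O <> I -> incid O l -> incid I l -> ~ incid B1 l -> exists P1, homothety_image O I A B1 P1.
Proof.
  intros OI Ol Il B1l.
  assert (OB1 : O <> B1) by (intro; subst; auto).
  assert (IB1 : I <> B1) by (intro; subst; auto).
  destruct (ap_line_exists AP O B1 OB1) as [lOB1 [OlOB1 B1lOB1]].
  destruct (ap_line_exists AP I B1 IB1) as [lIB1 [IlIB1 B1lIB1]].
  destruct (parallel_through A lIB1) as [m2 [Am2 m2lIB1]].
  destruct (parallels_meet lIB1 lOB1 m2 lOB1 B1) as [P1 [P1m2 P1lOB1]]; auto using parallel_refl.
  - intros <-. apply (joins_not_parallel l lIB1 lIB1 O I B1); auto using parallel_refl.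
  - exists P1. econstructor; eauto.
Qed.

Lemma homothety_image_on_line (m : Ln) (O I A B1 P1 : Pt) :
  O <> B1 -> incid O m -> incid B1 m -> homothety_image O I A B1 P1 -> incid P1 m.
Proof.
  intros OB1 Om B1m [lOB1 lIB1 m2 OlOB1 B1lOB1 _ _ _ _ _ P1lOB1].
  rewrite (ap_line_unique AP O B1 m lOB1 OB1 Om B1m OlOB1 B1lOB1). exact P1lOB1.
Qed.

Lemma homothety_image_unique (l : Ln) (O I A B1 P1 P1' : Pt) :
  O <> I -> incid O l -> incid I l -> ~ incid B1 l ->
  homothety_image O I A B1 P1 -> homothety_image O I A B1 P1' -> P1 = P1'.
Proof.
  intros OI Ol Il B1l [lOB1 lIB1 m2 OlOB1 B1lOB1 IlIB1 B1lIB1 Am2 m2lIB1 P1m2 P1lOB1]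
         [lOB1' lIB1' m2' OlOB1' B1lOB1' IlIB1' B1lIB1' Am2' m2'lIB1' P1'm2' P1'lOB1'].
  assert (OB1 : O <> B1) by (intro; subst; auto).
  assert (IB1 : I <> B1) by (intro; subst; auto).
  pose proof (ap_line_unique AP O B1 lOB1 lOB1' OB1 OlOB1 B1lOB1 OlOB1' B1lOB1'); subst lOB1'.
  pose proof (ap_line_unique AP I B1 lIB1 lIB1' IB1 IlIB1 B1lIB1 IlIB1' B1lIB1'); subst lIB1'.
  pose proof (parallel_through_unique lIB1 m2 m2' A Am2 m2lIB1 Am2' m2'lIB1'); subst m2'.
  apply (meet_unique m2 lOB1); auto.
  intros <-.
  exact (joins_not_parallel l m2 lIB1 O I B1 OI Ol Il B1l OlOB1 B1lOB1 IlIB1 B1lIB1 m2lIB1).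
Qed.

Lemma homothety_image_off (l : Ln) (O I A B1 P1 : Pt) :
  incid O l -> incid I l -> incid A l -> A <> O -> ~ incid B1 l ->
  homothety_image O I A B1 P1 -> ~ incid P1 l.
Proof.
  intros Ol Il Al AO B1l [lOB1 lIB1 m2 OlOB1 B1lOB1 IlIB1 B1lIB1 Am2 m2lIB1 P1m2 P1lOB1] P1l.
  assert (lOB1l : lOB1 <> l) by (intros ->; auto).
  pose proof (meet_unique lOB1 l P1 O lOB1l P1lOB1 P1l OlOB1 Ol); subst P1.
  rewrite (ap_line_unique AP A O m2 l AO Am2 P1m2 Al Ol) in m2lIB1.
  apply B1l. rewrite (parallel_eq l lIB1 I m2lIB1 Il IlIB1). exact B1lIB1.
Qed.

Lemma homothety_image_zero (l : Ln) (O I B1 P1 : Pt) :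
  O <> I -> incid O l -> incid I l -> ~ incid B1 l -> homothety_image O I O B1 P1 -> P1 = O.
Proof.
  intros OI Ol Il B1l [lOB1 lIB1 m2 OlOB1 B1lOB1 IlIB1 B1lIB1 Om2 m2lIB1 P1m2 P1lOB1].
  apply (meet_unique m2 lOB1); auto.
  intros <-.
  exact (joins_not_parallel l m2 lIB1 O I B1 OI Ol Il B1l OlOB1 B1lOB1 IlIB1 B1lIB1 m2lIB1).
Qed.

Lemma homothety_image_unit (l : Ln) (O I B1 P1 : Pt) :
  O <> I -> incid O l -> incid I l -> ~ incid B1 l -> homothety_image O I I B1 P1 -> P1 = B1.
Proof.
  intros OI Ol Il B1l [lOB1 lIB1 m2 OlOB1 B1lOB1 IlIB1 B1lIB1 Im2 m2lIB1 P1m2 P1lOB1].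
  rewrite (parallel_eq m2 lIB1 I m2lIB1 Im2 IlIB1) in P1m2.
  apply (meet_unique lIB1 lOB1); auto.
  intros <-. apply (joins_not_parallel l lIB1 lIB1 O I B1); auto using parallel_refl.
Qed.

Lemma homothety_image_moves (l : Ln) (O I A B1 P1 : Pt) :
  incid I l -> incid A l -> A <> I -> ~ incid B1 l -> homothety_image O I A B1 P1 -> P1 <> B1.
Proof.
  intros Il Al AI B1l [lOB1 lIB1 m2 _ _ IlIB1 B1lIB1 Am2 m2lIB1 P1m2 _] ->.
  rewrite (parallel_eq m2 lIB1 B1 m2lIB1 P1m2 B1lIB1) in Am2.
  apply AI. apply (meet_unique lIB1 l); auto. intros ->; auto.
Qed.

Lemma parallel_projection_exists (l : Ln) (B B1 P1 : Pt) :
  incid B l -> ~ incid B1 l -> exists S, parallel_projection l B B1 P1 S.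
Proof.
  intros Bl B1l. assert (BB1 : B <> B1) by (intro; subst; auto).
  destruct (ap_line_exists AP B B1 BB1) as [lBB1 [BlBB1 B1lBB1]].
  destruct (parallel_through P1 lBB1) as [m3 [P1m3 m3lBB1]].
  destruct (parallels_meet lBB1 l m3 l B) as [S [Sm3 Sl]]; auto using parallel_refl.
  { intros <-. auto. }
  exists S. econstructor; eauto.
Qed.

Lemma parallel_projection_unique (l : Ln) (B B1 P1 S S' : Pt) :
  incid B l -> ~ incid B1 l ->
  parallel_projection l B B1 P1 S -> parallel_projection l B B1 P1 S' -> S = S'.
Proof.
  intros Bl B1l [lBB1 m3 BlBB1 B1lBB1 P1m3 m3lBB1 Sm3 Sl]
                [lBB1' m3' BlBB1' B1lBB1' P1m3' m3'lBB1' S'm3' S'l].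
  assert (BB1 : B <> B1) by (intro; subst; auto).
  pose proof (ap_line_unique AP B B1 lBB1 lBB1' BB1 BlBB1 B1lBB1 BlBB1' B1lBB1'); subst lBB1'.
  pose proof (parallel_through_unique lBB1 m3 m3' P1 P1m3 m3lBB1 P1m3' m3'lBB1'); subst m3'.
  apply (meet_unique m3 l); auto.
  intros ->. exact (not_parallel_through_off l lBB1 B B1 Bl BlBB1 B1lBB1 B1l (parallel_sym _ _
    m3lBB1)).
Qed.

Lemma parallel_projection_on_base (l : Ln) (B B1 P1 S : Pt) :
  incid B l -> ~ incid B1 l -> incid P1 l -> parallel_projection l B B1 P1 S -> S = P1.
Proof.
  intros Bl B1l P1l [lBB1 m3 BlBB1 B1lBB1 P1m3 m3lBB1 Sm3 Sl].
  apply (meet_unique m3 l); auto.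
  intros ->. exact (not_parallel_through_off l lBB1 B B1 Bl BlBB1 B1lBB1 B1l (parallel_sym _ _
    m3lBB1)).
Qed.

Lemma parallel_projection_on_ray (l n : Ln) (B B1 P1 S : Pt) :
  incid B l -> ~ incid B1 l -> incid B n -> incid B1 n -> incid P1 n ->
  parallel_projection l B B1 P1 S -> S = B.
Proof.
  intros Bl B1l Bn B1n P1n [lBB1 m3 BlBB1 B1lBB1 P1m3 m3lBB1 Sm3 Sl].
  assert (BB1 : B <> B1) by (intro; subst; auto).
  pose proof (ap_line_unique AP B B1 n lBB1 BB1 Bn B1n BlBB1 B1lBB1); subst lBB1.
  pose proof (parallel_eq m3 n P1 m3lBB1 P1m3 P1n); subst m3.
  apply (meet_unique n l); auto. intros ->; auto.
Qed.

Lemma parallel_projection_fixed (l n : Ln) (B B1 P1 : Pt) :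
  incid B l -> ~ incid B1 l -> incid B n -> incid B1 n ->
  parallel_projection l B B1 P1 B -> incid P1 n.
Proof.
  intros Bl B1l Bn B1n [lBB1 m3 BlBB1 B1lBB1 P1m3 m3lBB1 Bm3 _].
  assert (BB1 : B <> B1) by (intro; subst; auto).
  rewrite (ap_line_unique AP B B1 n lBB1 BB1 Bn B1n BlBB1 B1lBB1).
  rewrite <- (parallel_eq m3 lBB1 B m3lBB1 Bm3 BlBB1). exact P1m3.
Qed.

Lemma parallel_projection_source_exists (l : Ln) (B1 P1 S : Pt) :
  ~ incid B1 l -> ~ incid P1 l -> incid S l ->
  exists B, incid B l /\ parallel_projection l B B1 P1 S.
Proof.
  intros B1l P1l Sl. assert (SP1 : S <> P1) by (intro; subst; auto).
  destruct (ap_line_exists AP S P1 SP1) as [m3 [Sm3 P1m3]].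
  destruct (parallel_through B1 m3) as [k [B1k km3]].
  destruct (parallels_meet m3 l k l S) as [B [Bk Bl]]; auto using parallel_refl.
  { intros <-. auto. }
  exists B. split; [exact Bl |].
  exact (ParallelProjection _ _ _ _ _ k m3 Bk B1k P1m3 (parallel_sym _ _ km3) Sm3 Sl).
Qed.

Lemma parallel_projection_source_unique (l : Ln) (B B' B1 P1 S : Pt) :
  incid B l -> incid B' l -> ~ incid B1 l -> ~ incid P1 l -> incid S l ->
  parallel_projection l B B1 P1 S -> parallel_projection l B' B1 P1 S -> B = B'.
Proof.
  intros Bl B'l B1l P1l Sl [lBB1 m3 BlBB1 B1lBB1 P1m3 m3lBB1 Sm3 _]
                           [lBB1' m3' BlBB1' B1lBB1' P1m3' m3'lBB1' Sm3' _].
  assert (SP1 : S <> P1) by (intro; subst; auto).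
  pose proof (ap_line_unique AP S P1 m3 m3' SP1 Sm3 P1m3 Sm3' P1m3'); subst m3'.
  pose proof (parallel_through_unique m3 lBB1 lBB1' B1 B1lBB1 (parallel_sym _ _ m3lBB1)
                B1lBB1' (parallel_sym _ _ m3'lBB1')); subst lBB1'.
  apply (meet_unique lBB1 l); auto. intros ->; auto.
Qed.

Lemma parallel_projection_inj (l m : Ln) (B B1 P1 P1' S : Pt) :
  incid B l -> ~ incid B1 l -> ~ incid S m -> incid P1 m -> incid P1' m ->
  parallel_projection l B B1 P1 S -> parallel_projection l B B1 P1' S -> P1 = P1'.
Proof.
  intros Bl B1l Sm P1m P1'm [lBB1 m3 BlBB1 B1lBB1 P1m3 m3lBB1 Sm3 _]
                           [lBB1' m3' BlBB1' B1lBB1' P1'm3' m3'lBB1' Sm3' _].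
  assert (BB1 : B <> B1) by (intro; subst; auto).
  pose proof (ap_line_unique AP B B1 lBB1 lBB1' BB1 BlBB1 B1lBB1 BlBB1' B1lBB1'); subst lBB1'.
  pose proof (parallel_through_unique lBB1 m3 m3' S Sm3 m3lBB1 Sm3' m3'lBB1'); subst m3'.
  apply (meet_unique m m3); auto. intros <-; auto.
Qed.

Definition add_config (l : Ln) (O A B B1 S : Pt) : Prop :=
  exists P1, translation_image l O A B1 P1 /\ parallel_projection l B B1 P1 S.

Definition mul_config (l : Ln) (O I A B B1 S : Pt) : Prop :=
  exists P1, homothety_image O I A B1 P1 /\ parallel_projection l B B1 P1 S.

Lemma add_config_exists (l : Ln) (O A B B1 : Pt) :
  incid O l -> incid B l -> ~ incid B1 l -> exists S, add_config l O A B B1 S.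
Proof.
  intros Ol Bl B1l.
  destruct (translation_image_exists l O A B1 Ol B1l) as [P1 HP].
  destruct (parallel_projection_exists l B B1 P1 Bl B1l) as [S HS].
  exists S, P1. split; assumption.
Qed.

Lemma mul_config_exists (l : Ln) (O I A B B1 : Pt) :
  O <> I -> incid O l -> incid I l -> incid B l -> ~ incid B1 l ->
  exists S, mul_config l O I A B B1 S.
Proof.
  intros OI Ol Il Bl B1l.
  destruct (homothety_image_exists l O I A B1 OI Ol Il B1l) as [P1 HP].
  destruct (parallel_projection_exists l B B1 P1 Bl B1l) as [S HS].
  exists S, P1. split; assumption.
Qed.

Lemma add_config_zero (l : Ln) (O B B1 S : Pt) :
  incid O l -> incid B l -> ~ incid B1 l -> add_config l O O B B1 S -> S = B.
Proof.
  intros Ol Bl B1l [P1 [HP HS]].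
  rewrite (translation_image_zero l O B1 P1 Ol B1l HP) in HS.
  assert (BB1 : B <> B1) by (intros ->; auto).
  destruct (ap_line_exists AP B B1 BB1) as [n [Bn B1n]].
  exact (parallel_projection_on_ray l n B B1 B1 S Bl B1l Bn B1n B1n HS).
Qed.

Lemma mul_config_zero_left (l : Ln) (O I B B1 S : Pt) :
  O <> I -> incid O l -> incid I l -> incid B l -> ~ incid B1 l ->
  mul_config l O I O B B1 S -> S = O.
Proof.
  intros OI Ol Il Bl B1l [P1 [HP HS]].
  rewrite (homothety_image_zero l O I B1 P1 OI Ol Il B1l HP) in HS.
  exact (parallel_projection_on_base l B B1 O S Bl B1l Ol HS).
Qed.

Lemma mul_config_unit_left (l : Ln) (O I B B1 S : Pt) :
  O <> I -> incid O l -> incid I l -> incid B l -> ~ incid B1 l ->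
  mul_config l O I I B B1 S -> S = B.
Proof.
  intros OI Ol Il Bl B1l [P1 [HP HS]].
  rewrite (homothety_image_unit l O I B1 P1 OI Ol Il B1l HP) in HS.
  assert (BB1 : B <> B1) by (intros ->; auto).
  destruct (ap_line_exists AP B B1 BB1) as [n [Bn B1n]].
  exact (parallel_projection_on_ray l n B B1 B1 S Bl B1l Bn B1n B1n HS).
Qed.

Lemma mul_config_zero_right (l : Ln) (O I A B1 S : Pt) :
  incid O l -> ~ incid B1 l -> mul_config l O I A O B1 S -> S = O.
Proof.
  intros Ol B1l [P1 [HP HS]].
  assert (OB1 : O <> B1) by (intros ->; auto).
  destruct (ap_line_exists AP O B1 OB1) as [n [On B1n]].
  pose proof (homothety_image_on_line n O I A B1 P1 OB1 On B1n HP) as P1n.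
  exact (parallel_projection_on_ray l n O B1 P1 S Ol B1l On B1n P1n HS).
Qed.

Lemma add_config_moves (l : Ln) (O A B B1 S : Pt) :
  incid O l -> incid A l -> incid B l -> A <> O -> ~ incid B1 l ->
  add_config l O A B B1 S -> S <> B.
Proof.
  intros Ol Al Bl AO B1l [P1 [HP HS]] ->.
  assert (BB1 : B <> B1) by (intro; subst; auto).
  destruct (ap_line_exists AP B B1 BB1) as [n [Bn B1n]].
  pose proof (parallel_projection_fixed l n B B1 P1 Bl B1l Bn B1n HS) as P1n.
  destruct (parallel_through B1 l) as [m1 [B1m1 m1l]].
  pose proof (translation_image_on_parallel l m1 O A B1 P1 B1m1 m1l HP) as P1m1.
  pose proof (translation_image_moves l O A B1 P1 Ol Al AO B1l HP) as P1B1.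
  assert (m1_l : m1 <> l) by (intros ->; auto).
  rewrite (ap_line_unique AP P1 B1 n m1 P1B1 P1n B1n P1m1 B1m1) in Bn.
  exact (parallel_disjoint m1 l B m1l m1_l Bn Bl).
Qed.

Lemma line_two_points_of_cover (l m : Ln) (O A B1 B1' : Pt) :
  (forall X, incid X l \/ incid X m) -> parallel m l -> m <> l ->
  incid B1 m -> incid B1' m -> B1 <> B1' -> incid O l -> incid A l -> A <> O ->
  forall Y, incid Y l -> Y = O \/ Y = A.
Proof.
  intros cover ml m_l B1m B1'm B1B1' Ol Al AO Y Yl.
  apply NNPP; intros [YO YA]%not_or_and.
  assert (Am : ~ incid A m) by (intro Am; exact (parallel_disjoint m l A ml m_l Am Al)).
  assert (AB1' : A <> B1') by (intros ->; auto).
  destruct (ap_line_exists AP A B1' AB1') as [k [Ak B1'k]].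
  assert (km : k <> m) by (intros ->; auto).
  assert (kl : k <> l) by (intros ->; exact (parallel_disjoint m l B1' ml m_l B1'm B1'k)).
  assert (B1k : ~ incid B1 k).
  { intro B1k. exact (B1B1' (meet_unique k m B1 B1' km B1k B1m B1'k B1'm)). }
  assert (avoid_k : forall Z, incid Z l -> Z <> A ->
            exists a, incid B1 a /\ incid Z a /\ forall X, ~ (incid X a /\ incid X k)).
  { intros Z Zl ZA.
    assert (B1Z : B1 <> Z) by (intros ->; exact (parallel_disjoint m l Z ml m_l B1m Zl)).
    destruct (ap_line_exists AP B1 Z B1Z) as [a [B1a Za]].
    exists a. split; [exact B1a | split; [exact Za |]].
    assert (al : a <> l) by (intros ->; exact (parallel_disjoint m l B1 ml m_l B1m B1a)).
    assert (am : a <> m) by (intros ->; exact (parallel_disjoint m l Z ml m_l Za Zl)).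
    intros X [Xa Xk]. destruct (cover X) as [Xl | Xm].
    - apply ZA. rewrite <- (meet_unique a l X Z al Xa Xl Za Zl).
      exact (meet_unique k l X A kl Xk Xl Ak Al).
    - apply B1B1'. rewrite <- (meet_unique a m X B1 am Xa Xm B1a B1m).
      exact (meet_unique k m X B1' km Xk Xm B1'k B1'm). }
  destruct (avoid_k O Ol (not_eq_sym AO)) as [a [B1a [Oa Da]]].
  destruct (avoid_k Y Yl YA) as [b [B1b [Yb Db]]].
  pose proof (ap_playfair_unique AP B1 k a b B1k B1a Da B1b Db); subst b.
  apply YO. apply (meet_unique a l); auto.
  intros ->. exact (parallel_disjoint m l B1 ml m_l B1m B1a).
Qed.

(* The four-point plane, where no auxiliary point avoids both l and the parallel through B1 and B1':
   there l = {O, A}, and S and S' are both the point of l other than B. *)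
Lemma add_config_indep_small_plane (l m : Ln) (O A B B1 B1' S S' : Pt) :
  (forall X, incid X l \/ incid X m) -> parallel m l -> incid B1 m -> incid B1' m ->
  incid O l -> incid A l -> incid B l -> A <> O -> ~ incid B1 l -> ~ incid B1' l ->
  add_config l O A B B1 S -> add_config l O A B B1' S' -> S = S'.
Proof.
  intros cover ml B1m B1'm Ol Al Bl AO B1l B1'l HS HS'.
  destruct (classic (B1 = B1')) as [<- | B1B1'].
  { destruct HS as [P1 [HP HS]], HS' as [P1' [HP' HS']].
    rewrite <- (translation_image_unique l O A B1 P1 P1' Ol B1l HP HP') in HS'.
    exact (parallel_projection_unique l B B1 P1 S S' Bl B1l HS HS'). }
  assert (m_l : m <> l) by (intros ->; auto).
  pose proof (line_two_points_of_cover l m O A B1 B1' cover ml m_l B1m B1'm B1B1' Ol Al AO) as two.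
  pose proof (add_config_moves l O A B B1 S Ol Al Bl AO B1l HS) as SB.
  pose proof (add_config_moves l O A B B1' S' Ol Al Bl AO B1'l HS') as S'B.
  assert (Sl : incid S l) by (destruct HS as [? [_ [? ? _ _ _ _ _ Sl]]]; exact Sl).
  assert (S'l : incid S' l) by (destruct HS' as [? [_ [? ? _ _ _ _ _ S'l]]]; exact S'l).
  destruct (two S Sl) as [-> | ->], (two S' S'l) as [-> | ->], (two B Bl) as [-> | ->]; congruence.
Qed.

Lemma add_config_opp_exists (l : Ln) (O Y B1 : Pt) :
  incid O l -> ~ incid B1 l -> exists Z, incid Z l /\ add_config l O Y Z B1 O.
Proof.
  intros Ol B1l. destruct (translation_image_exists l O Y B1 Ol B1l) as [P1 HP].
  pose proof (translation_image_off l O Y B1 P1 B1l HP) as P1l.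
  destruct (parallel_projection_source_exists l B1 P1 O B1l P1l Ol) as [Z [Zl HZ]].
  exists Z. split; [exact Zl |]. exists P1. split; assumption.
Qed.

Lemma add_config_opp_unique (l : Ln) (O Y Z Z' B1 : Pt) :
  incid O l -> incid Z l -> incid Z' l -> ~ incid B1 l ->
  add_config l O Y Z B1 O -> add_config l O Y Z' B1 O -> Z = Z'.
Proof.
  intros Ol Zl Z'l B1l [P1 [HP HZ]] [P1' [HP' HZ']].
  rewrite <- (translation_image_unique l O Y B1 P1 P1' Ol B1l HP HP') in HZ'.
  pose proof (translation_image_off l O Y B1 P1 B1l HP) as P1l.
  exact (parallel_projection_source_unique l Z Z' B1 P1 O Zl Z'l B1l P1l Ol HZ HZ').
Qed.

Lemma add_config_opp_inj (l : Ln) (O Y Y' Z B1 : Pt) :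
  incid O l -> incid Y l -> incid Y' l -> incid Z l -> ~ incid B1 l ->
  add_config l O Y Z B1 O -> add_config l O Y' Z B1 O -> Y = Y'.
Proof.
  intros Ol Yl Y'l Zl B1l [P1 [HP HZ]] [P1' [HP' HZ']].
  destruct (parallel_through B1 l) as [m1 [B1m1 m1l]].
  assert (Om1 : ~ incid O m1).
  { intro Om1. apply B1l. rewrite <- (parallel_eq m1 l O m1l Om1 Ol). exact B1m1. }
  pose proof (translation_image_on_parallel l m1 O Y B1 P1 B1m1 m1l HP) as P1m1.
  pose proof (translation_image_on_parallel l m1 O Y' B1 P1' B1m1 m1l HP') as P1'm1.
  rewrite <- (parallel_projection_inj l m1 Z B1 P1 P1' O Zl B1l Om1 P1m1 P1'm1 HZ HZ') in HP'.
  exact (translation_image_inj l O Y Y' B1 P1 Ol Yl Y'l B1l HP HP').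
Qed.

Lemma mul_config_inv_exists (l : Ln) (O I Y B1 : Pt) :
  O <> I -> incid O l -> incid I l -> incid Y l -> Y <> O -> ~ incid B1 l ->
  exists Z, incid Z l /\ mul_config l O I Y Z B1 I.
Proof.
  intros OI Ol Il Yl YO B1l. destruct (homothety_image_exists l O I Y B1 OI Ol Il B1l) as [P1 HP].
  pose proof (homothety_image_off l O I Y B1 P1 Ol Il Yl YO B1l HP) as P1l.
  destruct (parallel_projection_source_exists l B1 P1 I B1l P1l Il) as [Z [Zl HZ]].
  exists Z. split; [exact Zl |]. exists P1. split; assumption.
Qed.

Lemma mul_config_inv_unique (l : Ln) (O I Y Z Z' B1 : Pt) :
  O <> I -> incid O l -> incid I l -> incid Y l -> Y <> O -> incid Z l -> incid Z' l -> ~ incid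
    B1 l ->
  mul_config l O I Y Z B1 I -> mul_config l O I Y Z' B1 I -> Z = Z'.
Proof.
  intros OI Ol Il Yl YO Zl Z'l B1l [P1 [HP HZ]] [P1' [HP' HZ']].
  rewrite <- (homothety_image_unique l O I Y B1 P1 P1' OI Ol Il B1l HP HP') in HZ'.
  pose proof (homothety_image_off l O I Y B1 P1 Ol Il Yl YO B1l HP) as P1l.
  exact (parallel_projection_source_unique l Z Z' B1 P1 I Zl Z'l B1l P1l Il HZ HZ').
Qed.

Lemma on_line_incid (l : Ln) (O I X : Pt) :
  O <> I -> incid O l -> incid I l -> on_line O I X -> incid X l.
Proof.
  intros OI Ol Il (m & Om & Im & Xm). rewrite (ap_line_unique AP O I l m OI Ol Il Om Im). exact Xm.
Qed.

Lemma is_add_iff (O I A B S : Pt) :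
  is_add O I A B S <->
  exists l B1, incid O l /\ incid I l /\ ~ incid B1 l /\ add_config l O A B B1 S.
Proof.
  split.
  - intros (l & lOB1 & lBB1 & m1 & m2 & m3 & B1 & P1 & Ol & Il & B1l & OlOB1 & B1lOB1 & BlBB1 &
            B1lBB1 & B1m1 & m1l & Am2 & m2lOB1 & P1m1 & P1m2 & P1m3 & m3lBB1 & Sm3 & Sl).
    exists l, B1. repeat split; auto. exists P1. split; econstructor; eauto.
  - intros (l & B1 & Ol & Il & B1l & P1 &
            [lOB1 m1 m2 OlOB1 B1lOB1 B1m1 m1l P1m1 Am2 m2lOB1 P1m2] &
            [lBB1 m3 BlBB1 B1lBB1 P1m3 m3lBB1 Sm3 Sl]).
    exists l, lOB1, lBB1, m1, m2, m3, B1, P1. repeat split; auto.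
Qed.

Lemma is_mul_iff (O I A B S : Pt) :
  is_mul O I A B S <->
  exists l B1, incid O l /\ incid I l /\ ~ incid B1 l /\ mul_config l O I A B B1 S.
Proof.
  split.
  - intros (l & lOB1 & lIB1 & lBB1 & m2 & m3 & B1 & P1 & Ol & Il & B1l & OlOB1 & B1lOB1 & IlIB1 &
            B1lIB1 & BlBB1 & B1lBB1 & Am2 & m2lIB1 & P1m2 & P1lOB1 & P1m3 & m3lBB1 & Sm3 & Sl).
    exists l, B1. repeat split; auto. exists P1. split; econstructor; eauto.
  - intros (l & B1 & Ol & Il & B1l & P1 &
            [lOB1 lIB1 m2 OlOB1 B1lOB1 IlIB1 B1lIB1 Am2 m2lIB1 P1m2 P1lOB1] &
            [lBB1 m3 BlBB1 B1lBB1 P1m3 m3lBB1 Sm3 Sl]).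
    exists l, lOB1, lIB1, lBB1, m2, m3, B1, P1. repeat split; auto.
Qed.

(** * Collineations *)

Definition line_image (d : Pt -> Pt) (l : Ln) : Ln :=
  epsilon (inhabits l) (fun m => forall P, incid P l <-> incid (d P) m).

Lemma line_image_spec (d : Pt -> Pt) :
  collineation d -> forall l P, incid P l <-> incid (d P) (line_image d l).
Proof.
  intros (_ & _ & lines & _) l.
  exact (epsilon_spec (inhabits l) (fun m => forall P, incid P l <-> incid (d P) m) (lines l)).
Qed.

Lemma parallel_image (d : Pt -> Pt) :
  collineation d -> forall l m, parallel l m -> parallel (line_image d l) (line_image d m).
Proof.
  intros Hd l m [-> | D]; [now left |]. right. intros X [Xl Xm].
  destruct (proj1 (proj2 Hd) X) as [P <-].
  apply (D P). split; [apply (line_image_spec d Hd l) | apply (line_image_spec d Hd m)]; assumption.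
Qed.

Lemma image_neq (d : Pt -> Pt) (P Q : Pt) : collineation d -> P <> Q -> d P <> d Q.
Proof. intros [inj _] PQ E. exact (PQ (inj P Q E)). Qed.

Lemma on_line_image (d : Pt -> Pt) (O I X : Pt) :
  collineation d -> on_line O I X -> on_line (d O) (d I) (d X).
Proof.
  intros Hd (l & Ol & Il & Xl). exists (line_image d l).
  repeat split; apply (line_image_spec d Hd l); assumption.
Qed.

Lemma is_add_image (d : Pt -> Pt) (O I A B S : Pt) :
  collineation d -> is_add O I A B S -> is_add (d O) (d I) (d A) (d B) (d S).
Proof.
  intros Hd (l & lOB1 & lBB1 & m1 & m2 & m3 & B1 & P1 & H).
  pose proof (line_image_spec d Hd) as Inc. pose proof (parallel_image d Hd) as Par.
  exists (line_image d l), (line_image d lOB1), (line_image d lBB1), (line_image d m1),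
         (line_image d m2), (line_image d m3), (d B1), (d P1).
  decompose [and] H.
  repeat split; first [apply Par; assumption | apply Inc; assumption | rewrite <- Inc; assumption].
Qed.

Lemma is_mul_image (d : Pt -> Pt) (O I A B S : Pt) :
  collineation d -> is_mul O I A B S -> is_mul (d O) (d I) (d A) (d B) (d S).
Proof.
  intros Hd (l & lOB1 & lIB1 & lBB1 & m2 & m3 & B1 & P1 & H).
  pose proof (line_image_spec d Hd) as Inc. pose proof (parallel_image d Hd) as Par.
  exists (line_image d l), (line_image d lOB1), (line_image d lIB1), (line_image d lBB1),
         (line_image d m2), (line_image d m3), (d B1), (d P1).
  decompose [and] H.
  repeat split; first [apply Par; assumption | apply Inc; assumption | rewrite <- Inc; assumption].
Qed.

Section Desargues.

Hypothesis HD : desargues AP.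

(** * Independence of the auxiliary point *)

Lemma translation_images_parallel (l k k' : Ln) (O A B1 B1' P1 P1' : Pt) :
  incid O l -> incid A l -> A <> O -> ~ incid B1 l -> ~ incid B1' l ->
  (forall m, incid B1 m -> parallel m l -> ~ incid B1' m) ->
  translation_image l O A B1 P1 -> translation_image l O A B1' P1' ->
  incid B1 k -> incid B1' k -> incid P1 k' -> incid P1' k' -> parallel k k'.
Proof.
  intros Ol Al AO B1l B1'l B1'off HP HP' B1k B1'k P1k' P1'k'.
  pose proof (translation_image_off l O A B1 P1 B1l HP) as P1l.
  pose proof (translation_image_off l O A B1' P1' B1'l HP') as P1'l.
  pose proof (translation_image_moves l O A B1 P1 Ol Al AO B1l HP) as P1B1.
  pose proof (translation_image_moves l O A B1' P1' Ol Al AO B1'l HP') as P1'B1'.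
  destruct HP as [lOB1 m1 m2 OlOB1 B1lOB1 B1m1 m1l P1m1 Am2 m2lOB1 P1m2].
  destruct HP' as [lOB1' m1' m2' OlOB1' B1'lOB1' B1'm1' m1'l P1'm1' Am2' m2'lOB1' P1'm2'].
  pose proof (B1'off m1 B1m1 m1l) as B1'm1.
  assert (m1m1' : m1 <> m1') by (intros ->; auto).
  assert (lOB1m2 : lOB1 <> m2).
  { intros <-. apply B1l. rewrite (ap_line_unique AP A O l lOB1 AO Al Ol Am2 OlOB1). exact B1lOB1. }
  assert (lOB1'm2' : lOB1' <> m2').
  { intros <-. apply B1'l. rewrite (ap_line_unique AP A O l lOB1' AO Al Ol Am2' OlOB1').
    exact B1'lOB1'. }
  apply (HD B1 O B1' P1 A P1' m1 l m1' lOB1 m2 lOB1' m2' k k'); auto using parallel_sym.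
  all: try (intro; subst; solve [auto]).
  - intros <-. exact (parallel_disjoint m1 m1' P1 (parallel_trans _ _ _ m1l (parallel_sym _ _ m1'l))
                        m1m1' P1m1 P1'm1').
  - left. split; [| split]; eauto using parallel_sym, parallel_trans.
Qed.

Lemma homothety_images_parallel (l k k' : Ln) (O I A B1 B1' P1 P1' : Pt) :
  O <> I -> incid O l -> incid I l -> incid A l -> A <> O -> A <> I ->
  ~ incid B1 l -> ~ incid B1' l -> (forall m, incid O m -> incid B1 m -> ~ incid B1' m) ->
  homothety_image O I A B1 P1 -> homothety_image O I A B1' P1' ->
  incid B1 k -> incid B1' k -> incid P1 k' -> incid P1' k' -> parallel k k'.
Proof.
  intros OI Ol Il Al AO AI B1l B1'l B1'off HP HP' B1k B1'k P1k' P1'k'.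
  pose proof (homothety_image_off l O I A B1 P1 Ol Il Al AO B1l HP) as P1l.
  pose proof (homothety_image_off l O I A B1' P1' Ol Il Al AO B1'l HP') as P1'l.
  pose proof (homothety_image_moves l O I A B1 P1 Il Al AI B1l HP) as P1B1.
  pose proof (homothety_image_moves l O I A B1' P1' Il Al AI B1'l HP') as P1'B1'.
  destruct HP as [lOB1 lIB1 m2 OlOB1 B1lOB1 IlIB1 B1lIB1 Am2 m2lIB1 P1m2 P1lOB1].
  destruct HP' as [lOB1' lIB1' m2' OlOB1' B1'lOB1' IlIB1' B1'lIB1' Am2' m2'lIB1' P1'm2' P1'lOB1'].
  pose proof (B1'off lOB1 OlOB1 B1lOB1) as B1'lOB1.
  assert (lIB1m2 : lIB1 <> m2).
  { intros <-. apply B1l. rewrite (ap_line_unique AP A I l lIB1 AI Al Il Am2 IlIB1). exact B1lIB1. }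
  assert (lIB1'm2' : lIB1' <> m2').
  { intros <-. apply B1'l. rewrite (ap_line_unique AP A I l lIB1' AI Al Il Am2' IlIB1').
    exact B1'lIB1'. }
  assert (lOB1lOB1' : lOB1 <> lOB1') by (intros <-; auto).
  apply (HD B1 I B1' P1 A P1' lOB1 l lOB1' lIB1 m2 lIB1' m2' k k'); auto using parallel_sym.
  all: try (intro; subst; solve [auto]).
  - intros <-. apply P1l.
    rewrite (meet_unique lOB1 lOB1' P1 O lOB1lOB1' P1lOB1 P1'lOB1' OlOB1 OlOB1').
    exact Ol.
  - right. exists O. auto.
Qed.

Lemma parallel_projection_transfer (l n n' k k' : Ln) (B B1 B1' P1 P1' S : Pt) :
  l <> n -> n <> n' -> l <> n' ->
  ((parallel l n /\ parallel n n' /\ parallel l n') \/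
   (exists Z, incid Z l /\ incid Z n /\ incid Z n')) ->
  incid B l -> ~ incid B n -> ~ incid B1' l -> ~ incid P1 l -> ~ incid P1' l ->
  incid B1 n -> incid P1 n -> incid B1' n' -> incid P1' n' ->
  B1 <> P1 -> B1' <> P1' -> B1 <> B1' -> P1 <> P1' ->
  incid B1 k -> incid B1' k -> incid P1 k' -> incid P1' k' -> parallel k k' -> k <> k' ->
  parallel_projection l B B1 P1 S -> parallel_projection l B B1' P1' S.
Proof.
  intros ln nn' ln' pencil Bl Bn B1'l P1l P1'l B1n P1n B1'n' P1'n' B1P1 B1'P1' B1B1' P1P1'
    B1k B1'k P1k' P1'k' kk' k_k' [lBB1 m3 BlBB1 B1lBB1 P1m3 m3lBB1 Sm3 Sl].
  assert (lBB1m3 : lBB1 <> m3).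
  { intros <-. apply Bn. rewrite <- (ap_line_unique AP B1 P1 lBB1 n B1P1 B1lBB1 P1m3 B1n P1n).
    exact BlBB1. }
  assert (BS : B <> S).
  { intros <-. exact (lBB1m3 (eq_sym (parallel_eq m3 lBB1 B m3lBB1 Sm3 BlBB1))). }
  assert (BB1' : B <> B1') by (intros <-; auto).
  assert (SP1' : S <> P1') by (intros <-; auto).
  destruct (ap_line_exists AP B B1' BB1') as [j [Bj B1'j]].
  destruct (ap_line_exists AP S P1' SP1') as [j' [Sj' P1'j']].
  assert (jj' : parallel j j').
  { apply (HD B B1 B1' S P1 P1' l n n' lBB1 m3 k k' j j'); auto using parallel_sym.
    all: intro; subst; auto. }
  exact (ParallelProjection _ _ _ _ _ j j' Bj B1'j P1'j' (parallel_sym _ _ jj') Sj' Sl).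
Qed.

Lemma add_config_indep_generic (l : Ln) (O A B B1 B1' S S' : Pt) :
  incid O l -> incid A l -> incid B l -> A <> O -> ~ incid B1 l -> ~ incid B1' l ->
  (forall m, incid B1 m -> parallel m l -> ~ incid B1' m) ->
  add_config l O A B B1 S -> add_config l O A B B1' S' -> S = S'.
Proof.
  intros Ol Al Bl AO B1l B1'l B1'off [P1 [HP HS]] [P1' [HP' HS']].
  destruct (parallel_through B1 l) as [m1 [B1m1 m1l]].
  destruct (parallel_through B1' l) as [m1' [B1'm1' m1'l]].
  pose proof (translation_image_on_parallel l m1 O A B1 P1 B1m1 m1l HP) as P1m1.
  pose proof (translation_image_on_parallel l m1' O A B1' P1' B1'm1' m1'l HP') as P1'm1'.
  pose proof (translation_image_off l O A B1 P1 B1l HP) as P1l.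
  pose proof (translation_image_off l O A B1' P1' B1'l HP') as P1'l.
  pose proof (translation_image_moves l O A B1 P1 Ol Al AO B1l HP) as P1B1.
  pose proof (translation_image_moves l O A B1' P1' Ol Al AO B1'l HP') as P1'B1'.
  pose proof (B1'off m1 B1m1 m1l) as B1'm1.
  assert (m1l' : m1 <> l) by (intros ->; auto).
  assert (m1m1' : m1 <> m1') by (intros ->; auto).
  assert (par_m1m1' : parallel m1 m1') by eauto using parallel_trans, parallel_sym.
  assert (B1B1' : B1 <> B1') by (intros ->; auto).
  assert (P1P1' : P1 <> P1').
  { intros <-. exact (parallel_disjoint m1 m1' P1 par_m1m1' m1m1' P1m1 P1'm1'). }
  destruct (ap_line_exists AP B1 B1' B1B1') as [k [B1k B1'k]].
  destruct (ap_line_exists AP P1 P1' P1P1') as [k' [P1k' P1'k']].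
  assert (kk' : parallel k k')
    by exact (translation_images_parallel l k k' O A B1 B1' P1 P1' Ol Al AO B1l B1'l B1'off HP HP'
                B1k B1'k P1k' P1'k').
  assert (k_k' : k <> k').
  { intros <-. apply B1'm1.
    rewrite <- (ap_line_unique AP B1 P1 k m1 (not_eq_sym P1B1) B1k P1k' B1m1 P1m1).
    exact B1'k. }
  apply (parallel_projection_unique l B B1' P1' S S' Bl B1'l); [| exact HS'].
  apply (parallel_projection_transfer l m1 m1' k k' B B1 B1' P1 P1' S); auto using not_eq_sym.
  - intros <-. auto.
  - left. eauto using parallel_sym, parallel_trans.
  - intro Bm1. exact (parallel_disjoint m1 l B m1l m1l' Bm1 Bl).
Qed.

Lemma add_config_indep (l : Ln) (O A B B1 B1' S S' : Pt) :
  incid O l -> incid A l -> incid B l -> ~ incid B1 l -> ~ incid B1' l ->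
  add_config l O A B B1 S -> add_config l O A B B1' S' -> S = S'.
Proof.
  intros Ol Al Bl B1l B1'l HS HS'.
  destruct (classic (A = O)) as [-> | AO].
  { rewrite (add_config_zero l O B B1 S Ol Bl B1l HS). symmetry.
    exact (add_config_zero l O B B1' S' Ol Bl B1'l HS'). }
  destruct (classic (forall m, incid B1 m -> parallel m l -> ~ incid B1' m)) as [B1'off | B1'on].
  { exact (add_config_indep_generic l O A B B1 B1' S S' Ol Al Bl AO B1l B1'l B1'off HS HS'). }
  apply not_all_ex_not in B1'on as [m1 B1'on].
  apply imply_to_and in B1'on as [B1m1 B1'on]; apply imply_to_and in B1'on as [m1l B1'm1%NNPP].
  destruct (classic (exists X, ~ incid X l /\ ~ incid X m1)) as [[X [Xl Xm1]] | no_third].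
  - destruct (add_config_exists l O A B X Ol Bl Xl) as [S'' HS''].
    transitivity S''.
    + apply (add_config_indep_generic l O A B B1 X S S''); auto.
      intros m B1m ml. rewrite (parallel_through_unique l m m1 B1 B1m ml B1m1 m1l). exact Xm1.
    + apply (add_config_indep_generic l O A B X B1' S'' S'); auto.
      intros m Xm ml B1'm. apply Xm1.
      rewrite (parallel_through_unique l m1 m B1' B1'm1 m1l B1'm ml). exact Xm.
  - apply (add_config_indep_small_plane l m1 O A B B1 B1' S S'); auto.
    intro X. apply NNPP. intros [Xl Xm1]%not_or_and. eauto.
Qed.

Lemma mul_config_indep_generic (l : Ln) (O I A B B1 B1' S S' : Pt) :
  O <> I -> incid O l -> incid I l -> incid A l -> incid B l ->
  A <> O -> A <> I -> B <> O -> ~ incid B1 l -> ~ incid B1' l ->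
  (forall m, incid O m -> incid B1 m -> ~ incid B1' m) ->
  mul_config l O I A B B1 S -> mul_config l O I A B B1' S' -> S = S'.
Proof.
  intros OI Ol Il Al Bl AO AI BO B1l B1'l B1'off [P1 [HP HS]] [P1' [HP' HS']].
  assert (OB1 : O <> B1) by (intros ->; auto).
  assert (OB1' : O <> B1') by (intros ->; auto).
  destruct (ap_line_exists AP O B1 OB1) as [n [On B1n]].
  destruct (ap_line_exists AP O B1' OB1') as [n' [On' B1'n']].
  pose proof (homothety_image_on_line n O I A B1 P1 OB1 On B1n HP) as P1n.
  pose proof (homothety_image_on_line n' O I A B1' P1' OB1' On' B1'n' HP') as P1'n'.
  pose proof (homothety_image_off l O I A B1 P1 Ol Il Al AO B1l HP) as P1l.
  pose proof (homothety_image_off l O I A B1' P1' Ol Il Al AO B1'l HP') as P1'l.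
  pose proof (homothety_image_moves l O I A B1 P1 Il Al AI B1l HP) as P1B1.
  pose proof (homothety_image_moves l O I A B1' P1' Il Al AI B1'l HP') as P1'B1'.
  pose proof (B1'off n On B1n) as B1'n.
  assert (nn' : n <> n') by (intros ->; auto).
  assert (ln : l <> n) by (intros ->; auto).
  assert (B1B1' : B1 <> B1') by (intros ->; auto).
  assert (P1P1' : P1 <> P1').
  { intros <-. apply P1l. rewrite (meet_unique n n' P1 O nn' P1n P1'n' On On'). exact Ol. }
  destruct (ap_line_exists AP B1 B1' B1B1') as [k [B1k B1'k]].
  destruct (ap_line_exists AP P1 P1' P1P1') as [k' [P1k' P1'k']].
  assert (kk' : parallel k k')
    by exact (homothety_images_parallel l k k' O I A B1 B1' P1 P1' OI Ol Il Al AO AI B1l B1'l B1'off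
                HP HP' B1k B1'k P1k' P1'k').
  assert (k_k' : k <> k').
  { intros <-. apply B1'n.
    rewrite <- (ap_line_unique AP B1 P1 k n (not_eq_sym P1B1) B1k P1k' B1n P1n).
    exact B1'k. }
  apply (parallel_projection_unique l B B1' P1' S S' Bl B1'l); [| exact HS'].
  apply (parallel_projection_transfer l n n' k k' B B1 B1' P1 P1' S); auto using not_eq_sym.
  - intros <-. auto.
  - right. exists O. auto.
  - intro Bn. exact (BO (meet_unique l n B O ln Bl Bn Ol On)).
Qed.

Lemma mul_config_indep (l : Ln) (O I A B B1 B1' S S' : Pt) :
  O <> I -> incid O l -> incid I l -> incid A l -> incid B l -> ~ incid B1 l -> ~ incid B1' l ->
  mul_config l O I A B B1 S -> mul_config l O I A B B1' S' -> S = S'.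
Proof.
  intros OI Ol Il Al Bl B1l B1'l HS HS'.
  destruct (classic (B = O)) as [-> | BO].
  { rewrite (mul_config_zero_right l O I A B1 S Ol B1l HS).
    exact (eq_sym (mul_config_zero_right l O I A B1' S' Ol B1'l HS')). }
  destruct (classic (A = O)) as [-> | AO].
  { rewrite (mul_config_zero_left l O I B B1 S OI Ol Il Bl B1l HS).
    exact (eq_sym (mul_config_zero_left l O I B B1' S' OI Ol Il Bl B1'l HS')). }
  destruct (classic (A = I)) as [-> | AI].
  { rewrite (mul_config_unit_left l O I B B1 S OI Ol Il Bl B1l HS).
    exact (eq_sym (mul_config_unit_left l O I B B1' S' OI Ol Il Bl B1'l HS')). }
  destruct (classic (forall m, incid O m -> incid B1 m -> ~ incid B1' m)) as [B1'off | B1'on].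
  { exact (mul_config_indep_generic l O I A B B1 B1' S S' OI Ol Il Al Bl AO AI BO B1l B1'l
              B1'off HS HS'). }
  apply not_all_ex_not in B1'on as [n B1'on].
  apply imply_to_and in B1'on as [On B1'on]; apply imply_to_and in B1'on as [B1n B1'n%NNPP].
  assert (In : ~ incid I n).
  { intro In. apply B1l. rewrite (ap_line_unique AP O I l n OI Ol Il On In). exact B1n. }
  destruct (exists_point_off_two_lines l n O I B1 Ol On Il In B1n B1l) as [X [Xl Xn]].
  destruct (mul_config_exists l O I A B X OI Ol Il Bl Xl) as [S'' HS''].
  assert (OB1 : O <> B1) by (intros ->; auto).
  assert (OB1' : O <> B1') by (intros ->; auto).
  transitivity S''.
  - apply (mul_config_indep_generic l O I A B B1 X S S''); auto.
    intros m Om B1m. rewrite (ap_line_unique AP O B1 m n OB1 Om B1m On B1n). exact Xn.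
  - apply (mul_config_indep_generic l O I A B X B1' S'' S'); auto.
    intros m Om Xm B1'm. apply Xn.
      rewrite <- (ap_line_unique AP O B1' m n OB1' Om B1'm On B1'n). exact Xm.
Qed.

(** * The skew-field operations *)

Lemma sadd_spec (O I A B : Pt) :
  O <> I -> on_line O I B -> is_add O I A B (sadd O I A B).
Proof.
  intros OI (l & Ol & Il & Bl). apply (epsilon_spec (inhabits O) (fun S => is_add O I A B S)).
  destruct (exists_point_off l) as [B1 B1l].
  destruct (add_config_exists l O A B B1 Ol Bl B1l) as [S HS].
  exists S. apply is_add_iff. exists l, B1. auto.
Qed.

Lemma smul_spec (O I A B : Pt) :
  O <> I -> on_line O I B -> is_mul O I A B (smul O I A B).
Proof.
  intros OI (l & Ol & Il & Bl). apply (epsilon_spec (inhabits O) (fun S => is_mul O I A B S)).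
  destruct (exists_point_off l) as [B1 B1l].
  destruct (mul_config_exists l O I A B B1 OI Ol Il Bl B1l) as [S HS].
  exists S. apply is_mul_iff. exists l, B1. auto.
Qed.

Lemma sadd_eq (O I A B S : Pt) :
  O <> I -> on_line O I A -> on_line O I B -> is_add O I A B S -> sadd O I A B = S.
Proof.
  intros OI HA HB HS. pose proof (sadd_spec O I A B OI HB) as HS0.
  apply is_add_iff in HS as (l & B1 & Ol & Il & B1l & HS).
  apply is_add_iff in HS0 as (l' & B1' & Ol' & Il' & B1'l & HS0).
  rewrite (ap_line_unique AP O I l' l OI Ol' Il' Ol Il) in B1'l, HS0.
  apply (add_config_indep l O A B B1' B1); eauto using on_line_incid.
Qed.

Lemma smul_eq (O I A B S : Pt) :
  O <> I -> on_line O I A -> on_line O I B -> is_mul O I A B S -> smul O I A B = S.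
Proof.
  intros OI HA HB HS. pose proof (smul_spec O I A B OI HB) as HS0.
  apply is_mul_iff in HS as (l & B1 & Ol & Il & B1l & HS).
  apply is_mul_iff in HS0 as (l' & B1' & Ol' & Il' & B1'l & HS0).
  rewrite (ap_line_unique AP O I l' l OI Ol' Il' Ol Il) in B1'l, HS0.
  apply (mul_config_indep l O I A B B1' B1); eauto using on_line_incid.
Qed.

Lemma add_config_sadd (l : Ln) (O I A B B1 : Pt) :
  O <> I -> incid O l -> incid I l -> incid A l -> incid B l -> ~ incid B1 l ->
  add_config l O A B B1 (sadd O I A B).
Proof.
  intros OI Ol Il Al Bl B1l. destruct (add_config_exists l O A B B1 Ol Bl B1l) as [S HS].
  rewrite (sadd_eq O I A B S OI); [exact HS | exists l; auto | exists l; auto |].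
  apply is_add_iff. exists l, B1. auto.
Qed.

Lemma mul_config_smul (l : Ln) (O I A B B1 : Pt) :
  O <> I -> incid O l -> incid I l -> incid A l -> incid B l -> ~ incid B1 l ->
  mul_config l O I A B B1 (smul O I A B).
Proof.
  intros OI Ol Il Al Bl B1l. destruct (mul_config_exists l O I A B B1 OI Ol Il Bl B1l) as [S HS].
  rewrite (smul_eq O I A B S OI); [exact HS | exists l; auto | exists l; auto |].
  apply is_mul_iff. exists l, B1. auto.
Qed.

Lemma sadd_on_line (O I A B : Pt) :
  O <> I -> on_line O I B -> on_line O I (sadd O I A B).
Proof.
  intros OI HB. pose proof (sadd_spec O I A B OI HB) as HS.
  apply is_add_iff in HS as (l & B1 & Ol & Il & _ & P1 & _ & [lBB1 m3 _ _ _ _ _ Sl]).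
  exists l. auto.
Qed.

Lemma sopp_spec (O I Y : Pt) :
  O <> I -> on_line O I Y -> on_line O I (sopp O I Y) /\ sadd O I Y (sopp O I Y) = O.
Proof.
  intros OI HY. apply (epsilon_spec (inhabits O) (fun Z => on_line O I Z /\ sadd O I Y Z = O)).
  destruct HY as (l & Ol & Il & Yl). destruct (exists_point_off l) as [B1 B1l].
  destruct (add_config_opp_exists l O Y B1 Ol B1l) as [Z [Zl HZ]].
  exists Z. split; [exists l; auto |].
  apply sadd_eq; [exact OI | exists l; auto | exists l; auto |].
  apply is_add_iff. exists l, B1. auto.
Qed.

Lemma sinv_spec (O I Y : Pt) :
  O <> I -> on_line O I Y -> Y <> O -> on_line O I (sinv O I Y) /\ smul O I Y (sinv O I Y) = I.
Proof.
  intros OI HY YO. apply (epsilon_spec (inhabits O) (fun Z => on_line O I Z /\ smul O I Y Z = I)).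
  destruct HY as (l & Ol & Il & Yl). destruct (exists_point_off l) as [B1 B1l].
  destruct (mul_config_inv_exists l O I Y B1 OI Ol Il Yl YO B1l) as [Z [Zl HZ]].
  exists Z. split; [exists l; auto |].
  apply smul_eq; [exact OI | exists l; auto | exists l; auto |].
  apply is_mul_iff. exists l, B1. auto.
Qed.

Lemma sopp_unique (O I Y Z : Pt) :
  O <> I -> on_line O I Y -> on_line O I Z -> sadd O I Y Z = O -> sopp O I Y = Z.
Proof.
  intros OI HY HZ E. destruct (sopp_spec O I Y OI HY) as [HZ0 E0].
  destruct HY as (l & Ol & Il & Yl). destruct (exists_point_off l) as [B1 B1l].
  pose proof (on_line_incid l O I Z OI Ol Il HZ) as Zl.
  pose proof (on_line_incid l O I _ OI Ol Il HZ0) as Z0l.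
  pose proof (add_config_sadd l O I Y Z B1 OI Ol Il Yl Zl B1l) as HS.
  pose proof (add_config_sadd l O I Y (sopp O I Y) B1 OI Ol Il Yl Z0l B1l) as HS0.
  rewrite E in HS. rewrite E0 in HS0.
  exact (add_config_opp_unique l O Y _ Z B1 Ol Z0l Zl B1l HS0 HS).
Qed.

Lemma sinv_unique (O I Y Z : Pt) :
  O <> I -> on_line O I Y -> Y <> O -> on_line O I Z -> smul O I Y Z = I -> sinv O I Y = Z.
Proof.
  intros OI HY YO HZ E. destruct (sinv_spec O I Y OI HY YO) as [HZ0 E0].
  destruct HY as (l & Ol & Il & Yl). destruct (exists_point_off l) as [B1 B1l].
  pose proof (on_line_incid l O I Z OI Ol Il HZ) as Zl.
  pose proof (on_line_incid l O I _ OI Ol Il HZ0) as Z0l.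
  pose proof (mul_config_smul l O I Y Z B1 OI Ol Il Yl Zl B1l) as HS.
  pose proof (mul_config_smul l O I Y (sinv O I Y) B1 OI Ol Il Yl Z0l B1l) as HS0.
  rewrite E in HS. rewrite E0 in HS0.
  exact (mul_config_inv_unique l O I Y _ Z B1 OI Ol Il Yl YO Z0l Zl B1l HS0 HS).
Qed.

Lemma ssub_on_line (O I X Y : Pt) :
  O <> I -> on_line O I Y -> on_line O I (ssub O I X Y).
Proof. intros OI HY. apply sadd_on_line; [exact OI | exact (proj1 (sopp_spec O I Y OI HY))]. Qed.

Lemma ssub_neq_zero (O I X Y : Pt) :
  O <> I -> on_line O I X -> on_line O I Y -> X <> Y -> ssub O I X Y <> O.
Proof.
  intros OI HX HY XY E. apply XY. destruct (sopp_spec O I Y OI HY) as [HW EY].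
  destruct HX as (l & Ol & Il & Xl). destruct (exists_point_off l) as [B1 B1l].
  pose proof (on_line_incid l O I Y OI Ol Il HY) as Yl.
  pose proof (on_line_incid l O I _ OI Ol Il HW) as Wl.
  pose proof (add_config_sadd l O I X (sopp O I Y) B1 OI Ol Il Xl Wl B1l) as HX.
  pose proof (add_config_sadd l O I Y (sopp O I Y) B1 OI Ol Il Yl Wl B1l) as HY'.
  unfold ssub in E. rewrite E in HX. rewrite EY in HY'.
  exact (add_config_opp_inj l O X Y _ B1 Ol Xl Yl Wl B1l HX HY').
Qed.

Section Transport.

Variable d : Pt -> Pt.
Hypothesis Hd : collineation d.
Variables O I : Pt.
Hypothesis OI : O <> I.

Lemma sadd_image (A B : Pt) : on_line O I A -> on_line O I B ->
  d (sadd O I A B) = sadd (d O) (d I) (d A) (d B).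
Proof.
  intros HA HB. symmetry. apply sadd_eq; auto using on_line_image, image_neq.
  apply is_add_image; [exact Hd | exact (sadd_spec O I A B OI HB)].
Qed.

Lemma smul_image (A B : Pt) : on_line O I A -> on_line O I B ->
  d (smul O I A B) = smul (d O) (d I) (d A) (d B).
Proof.
  intros HA HB. symmetry. apply smul_eq; auto using on_line_image, image_neq.
  apply is_mul_image; [exact Hd | exact (smul_spec O I A B OI HB)].
Qed.

Lemma sopp_image (Y : Pt) : on_line O I Y -> d (sopp O I Y) = sopp (d O) (d I) (d Y).
Proof.
  intros HY. destruct (sopp_spec O I Y OI HY) as [HZ E]. symmetry.
  apply sopp_unique; auto using on_line_image, image_neq.
  rewrite <- (sadd_image Y (sopp O I Y) HY HZ), E. reflexivity.
Qed.

Lemma sinv_image (Y : Pt) : on_line O I Y -> Y <> O -> d (sinv O I Y) = sinv (d O) (d I) (d Y).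
Proof.
  intros HY YO. destruct (sinv_spec O I Y OI HY YO) as [HZ E]. symmetry.
  apply sinv_unique; auto using on_line_image, image_neq.
  rewrite <- (smul_image Y (sinv O I Y) HY HZ), E. reflexivity.
Qed.

Lemma ssub_image (X Y : Pt) : on_line O I X -> on_line O I Y ->
  d (ssub O I X Y) = ssub (d O) (d I) (d X) (d Y).
Proof.
  intros HX HY. unfold ssub.
  rewrite (sadd_image X (sopp O I Y) HX (proj1 (sopp_spec O I Y OI HY))), (sopp_image Y HY).
  reflexivity.
Qed.

Lemma ratio_image (A B C : Pt) :
  on_line O I A -> on_line O I B -> on_line O I C -> B <> C ->
  d (ratio O I A B C) = ratio (d O) (d I) (d A) (d B) (d C).
Proof.
  intros HA HB HC BC. unfold ratio.
  pose proof (ssub_on_line O I B C OI HC) as HBC.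
  pose proof (ssub_neq_zero O I B C OI HB HC BC) as BC0.
  rewrite (smul_image _ _ (proj1 (sinv_spec O I _ OI HBC BC0)) (ssub_on_line O I A C OI HC)).
  rewrite (sinv_image _ HBC BC0), !ssub_image; auto.
Qed.

End Transport.

End Desargues.
End AffineGeometry.

Theorem mainTheorem13 (AP : AffinePlane) (HD : desargues AP)
  (O I : Point AP) (d : Point AP -> Point AP) :
  O <> I -> dilatation d ->
  forall A B C : Point AP,
    on_line O I A -> on_line O I B -> on_line O I C -> B <> C ->
    d (ratio O I A B C) = ratio (d O) (d I) (d A) (d B) (d C).
Proof.
  intros OI [Hd _] A B C HA HB HC BC.
  exact (ratio_image HD d Hd O I OI A B C HA HB HC BC).
Qed.
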